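(* Let $q$ be a power of an odd prime, write $q-1=2^s r$ with $r$ odd, and let $c\in\mathbb{F}_q^*$. The functional graph of $f(X)=c(X^{q+1}+X^2)$ over $\mathbb{F}_{q^2}$ is isomorphic to $$\mathscr{Z}^*(q)\ \oplus\ \bigoplus_{d\mid r}\frac{q\,\varphi(d)}{\mathrm{ord}_{d}(2)}\times\big(Cyc(\mathrm{ord}_{d}(2)),\mathscr{T}(s)\big).$$
   Context: The functional graph of a map $f:\mathbb{F}_{q^2}\to\mathbb{F}_{q^2}$ is the directed graph with vertex set $\mathbb{F}_{q^2}$ and an edge $x\to f(x)$ for every $x$. $Cyc(n)$ is the directed cycle of length $n$. $\mathscr{T}(1)$ is the tree with two vertices $P_1,P$ and the edge $P_1\to P$ (root $P$); for $m\ge1$, $\mathscr{T}(m+1)$ is obtained from $\mathscr{T}(m)$ by attaching two new vertices, each with an edge directed to it, to every vertex of the last (top) level of $\mathscr{T}(m)$. $(Cyc(n),\mathscr{T}(m))$ is the graph obtained from $Cyc(n)$ by replacing each vertex of the cycle by a copy of $\mathscr{T}(m)$ whose root is that cycle vertex. $\mathscr{Z}^*(q)$ is the graph consisting of a vertex with a loop ($Cyc(1)$) to which $q-1$ copies of $\mathscr{T}(1)$ are attached, the root of each copy being identified with the fixed vertex (i.e. a fixed vertex with $q-1$ further vertices pointing to it, which have no preimages). $\oplus$ denotes disjoint union and $k\times G$ denotes $k$ disjoint copies of $G$. $\varphi$ is Euler's totient function and $\mathrm{ord}_m(n)$ is the multiplicative order of $n$ modulo $m$ (with $\mathrm{ord}_1(2)=1$).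 *)

From HB Require Import structures.
From mathcomp Require Import all_boot all_order all_algebra all_field.
Set Implicit Arguments. Unset Strict Implicit. Unset Printing Implicit Defensive.

Record fgraph := FGraph { fg_V : finType; fg_succ : fg_V -> fg_V }.

Definition fg_iso (G H : fgraph) : Prop :=
  exists phi : fg_V G -> fg_V H,
    bijective phi /\ forall x, phi (fg_succ x) = fg_succ (phi x).

Definition fgraph_of (T : finType) (f : T -> T) : fgraph := FGraph f.

Definition fg_sum (G H : fgraph) : fgraph :=
  @FGraph (fg_V G + fg_V H)%type
    (fun v => match v with inl x => inl (fg_succ x) | inr y => inr (fg_succ y) end).

Definition fg_bigsum (I : finType) (G : I -> fgraph) : fgraph :=
  @FGraph {i : I & fg_V (G i)}
    (fun v => Tagged (fun i => fg_V (G i)) (fg_succ (tagged v))).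

Definition fg_copies (k : nat) (G : fgraph) : fgraph :=
  fg_bigsum (fun _ : 'I_k => G).

(* Z^*(q): a fixed vertex (None) with q-1 further vertices (Some i) mapping
   to it, which have no preimages. *)
Definition Zstar (q : nat) : fgraph :=
  @FGraph (option 'I_q.-1) (fun _ => None).

Lemma half_ord_lt n (v : 'I_n) : v./2 < n.
Proof.
apply: leq_ltn_trans (ltn_ord v).
rewrite leq_half_double; apply: leq_trans (leq_addr v v) _; by rewrite addnn leqnSn.
Qed.

(* The tree T(m) encoded heap-style on {0,...,2^m - 1}: 0 is the root P,
   1 is P_1, and the two vertices attached to vertex v >= 1 are 2v and 2v+1.
   Every non-root vertex v points to v/2 (so 1 -> 0).  Level j >= 1 is
   [2^(j-1), 2^j).  The parent map on the root is irrelevant and is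
   overridden in cyc_tree below. *)
Definition tree_parent (m : nat) (v : 'I_(2 ^ m)) : 'I_(2 ^ m) :=
  Ordinal (half_ord_lt v).

(* (Cyc(n), T(m)): vertices (i, v), i the cycle position, v a vertex of the
   i-th copy of T(m); the roots (i, 0) form the cycle (i,0) -> (i+1 mod n, 0),
   other vertices point to their parent in the tree. *)
Definition cyc_tree (n m : nat) : fgraph :=
  @FGraph ('I_n * 'I_(2 ^ m))%type
    (fun p => if val p.2 == 0 then (ordS p.1, p.2) else (p.1, tree_parent p.2)).

(* Multiplicative order ord_m(a): least k >= 1 with a^k = 1 (mod m).
   (Searched within 1..m, which suffices whenever gcd(a,m) = 1, as
   ord_m(a) <= phi(m) <= m; gives ord_1(2) = 1.) *)
Definition mult_order (m a : nat) : nat :=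
  (find (fun k => a ^ k.+1 == 1 %[mod m]) (iota 0 m)).+1.

Definition divisor_idx (r : nat) := {d : 'I_r.+1 | (val d) %| r}.

(* Let Tr x = x^q + x be the trace of F_(q^2) over F_q = {x | x^q = x}. Then
   f x = c Tr(x) x and Tr (f x) = c Tr(x)^2, so the kernel of Tr, which has q
   elements, is an invariant set mapped onto 0: this is Z*(q). On its
   complement, x |-> (x / Tr x, c Tr x) conjugates f to the identity times
   squaring on {y | Tr y = 1} x F_q^*, that is to q copies of squaring on
   F_q^*. Through a primitive root this is doubling on Z/(q-1), which is
   doubling on Z/r times doubling on Z/2^s. Reversing binary digits turns
   doubling on Z/2^s into the parent map of the tree T(s), while doubling on
   Z/r permutes the phi(d) residues of additive order d in cycles of length
   ord_d(2). *)

From HB Require Import structures.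
From mathcomp Require Import all_boot all_order all_algebra all_field.
From mathcomp Require Import cyclic perm zify ring.
Import GRing.Theory.
Set Implicit Arguments. Unset Strict Implicit. Unset Printing Implicit Defensive.

(** * Isomorphisms of functional graphs *)

Lemma fg_iso_can (G H : fgraph) (phi : fg_V G -> fg_V H) (psi : fg_V H -> fg_V G) :
  cancel phi psi -> cancel psi phi -> {morph phi : x / fg_succ x} -> fg_iso G H.
Proof. by move=> phiK psiK phi_succ; exists phi; split => //; exists psi. Qed.

Lemma fg_iso_refl G : fg_iso G G.
Proof. exact: (@fg_iso_can G G id id). Qed.

Lemma fg_iso_sym G H : fg_iso G H -> fg_iso H G.
Proof.
case=> phi [[psi phiK psiK] phi_succ]; apply: (fg_iso_can psiK phiK) => y.
by rewrite -{1}(psiK y) -phi_succ phiK.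
Qed.

Lemma fg_iso_trans G H K : fg_iso G H -> fg_iso H K -> fg_iso G K.
Proof.
case=> phi [[psi phiK psiK] phi_succ] [phi' [[psi' phiK' psiK'] phi_succ']].
apply: (@fg_iso_can _ _ (phi' \o phi) (psi \o psi')); try exact: can_comp.
by move=> x /=; rewrite phi_succ phi_succ'.
Qed.

Lemma fg_iso_card G H : fg_iso G H -> #|fg_V G| = #|fg_V H|.
Proof. by case=> phi [phi_bij _]; apply: bij_eq_card phi_bij. Qed.

Lemma fg_iso_sum G G' H H' :
  fg_iso G G' -> fg_iso H H' -> fg_iso (fg_sum G H) (fg_sum G' H').
Proof.
case=> phi [[psi phiK psiK] phi_succ] [phi' [[psi' phiK' psiK'] phi_succ']].
apply: (@fg_iso_can (fg_sum G H) (fg_sum G' H')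
  (fun v => match v with inl x => inl (phi x) | inr y => inr (phi' y) end)
  (fun v => match v with inl x => inl (psi x) | inr y => inr (psi' y) end)).
- by case=> x /=; rewrite ?phiK ?phiK'.
- by case=> x /=; rewrite ?psiK ?psiK'.
- by case=> x /=; rewrite ?phi_succ ?phi_succ'.
Qed.

Lemma fg_iso_bigsum (I : finType) (G H : I -> fgraph) :
  (forall i, fg_iso (G i) (H i)) -> fg_iso (fg_bigsum G) (fg_bigsum H).
Proof.
move=> GH; have /fin_all_exists [phi phiP] := GH.
have /fin_all_exists [psi psiP] i : exists psi, cancel (phi i) psi /\ cancel psi (phi i).
  by case: (phiP i) => [[psi phiK psiK] _]; exists psi.
apply: (@fg_iso_can (fg_bigsum G) (fg_bigsum H)
  (fun v => Tagged (fun i => fg_V (H i)) (phi (tag v) (tagged v)))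
  (fun v => Tagged (fun i => fg_V (G i)) (psi (tag v) (tagged v)))).
- by case=> i x /=; case: (psiP i) => ->.
- by case=> i x /=; case: (psiP i) => _ ->.
- by case=> i x /=; case: (phiP i) => _ ->.
Qed.

Lemma fg_iso_copies n G H : fg_iso G H -> fg_iso (fg_copies n G) (fg_copies n H).
Proof. by move=> GH; apply: fg_iso_bigsum. Qed.

Lemma fg_bigsum_bool (G : bool -> fgraph) :
  fg_iso (fg_bigsum G) (fg_sum (G true) (G false)).
Proof.
apply: (@fg_iso_can (fg_bigsum G) (fg_sum (G true) (G false))
  (fun v => match v with existT true x => inl x | existT false x => inr x end)
  (fun v => match v with inl x => Tagged (fun b => fg_V (G b)) x
                    | inr x => Tagged (fun b => fg_V (G b)) x end)).
- by case=> [[] x].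
- by case.
- by case=> [[] x].
Qed.

Lemma fg_bigsum_const (I : finType) (G : fgraph) n :
  #|I| = n -> fg_iso (fg_bigsum (fun _ : I => G)) (fg_copies n G).
Proof.
move=> <-; apply: (@fg_iso_can (fg_bigsum (fun _ : I => G)) (fg_copies #|I| G)
  (fun v => existT (fun _ => fg_V G) (enum_rank (tag v)) (tagged v))
  (fun v => existT (fun _ => fg_V G) (enum_val (tag v)) (tagged v))).
- by case=> i x; rewrite /= enum_rankK.
- by case=> i x; rewrite /= enum_valK.
- by case.
Qed.

Lemma fg_copies_copies n m G :
  fg_iso (fg_copies n (fg_copies m G)) (fg_copies (n * m) G).
Proof.
have card_nm : #|{: 'I_n * 'I_m}| = n * m by rewrite card_prod !card_ord.
apply: fg_iso_trans (fg_bigsum_const G card_nm).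
apply: (@fg_iso_can (fg_copies n (fg_copies m G)) (fg_bigsum (fun _ : 'I_n * 'I_m => G))
  (fun v => existT (fun _ => fg_V G) (tag v, tag (tagged v)) (tagged (tagged v)))
  (fun v => existT (fun _ => fg_V (fg_copies m G)) (tag v).1
               (existT (fun _ => fg_V G) (tag v).2 (tagged v)))).
- by case=> i [j x].
- by case=> [[i j] x].
- by case=> i [j x].
Qed.

Lemma fg_copies_bigsum n (I : finType) (H : I -> fgraph) :
  fg_iso (fg_copies n (fg_bigsum H)) (fg_bigsum (fun i => fg_copies n (H i))).
Proof.
apply: (@fg_iso_can (fg_copies n (fg_bigsum H)) (fg_bigsum (fun i => fg_copies n (H i)))
  (fun v => existT (fun i => fg_V (fg_copies n (H i))) (tag (tagged v))
       (existT (fun _ => fg_V (H (tag (tagged v)))) (tag v) (tagged (tagged v))))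
  (fun v => existT (fun _ => fg_V (fg_bigsum H)) (tag (tagged v))
       (existT (fun i => fg_V (H i)) (tag v) (tagged (tagged v))))).
- by case=> j [i x].
- by case=> i [j x].
- by case=> j [i x].
Qed.

Definition fg_prod (G H : fgraph) : fgraph :=
  @FGraph (fg_V G * fg_V H)%type (fun p => (fg_succ p.1, fg_succ p.2)).

Lemma fg_iso_prod G G' H H' :
  fg_iso G G' -> fg_iso H H' -> fg_iso (fg_prod G H) (fg_prod G' H').
Proof.
case=> phi [[psi phiK psiK] phi_succ] [phi' [[psi' phiK' psiK'] phi_succ']].
apply: (@fg_iso_can (fg_prod G H) (fg_prod G' H')
  (fun v => (phi v.1, phi' v.2)) (fun v => (psi v.1, psi' v.2))).
- by case=> x y /=; rewrite phiK phiK'.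
- by case=> x y /=; rewrite psiK psiK'.
- by case=> x y /=; rewrite phi_succ phi_succ'.
Qed.

Lemma fg_prod_bigsum (I : finType) (G : I -> fgraph) H :
  fg_iso (fg_prod (fg_bigsum G) H) (fg_bigsum (fun i => fg_prod (G i) H)).
Proof.
apply: (@fg_iso_can (fg_prod (fg_bigsum G) H) (fg_bigsum (fun i => fg_prod (G i) H))
  (fun v => Tagged (fun i => fg_V (fg_prod (G i) H)) (tagged v.1, v.2))
  (fun v => (Tagged (fun i => fg_V (G i)) (tagged v).1, (tagged v).2))).
- by case=> [[i x] y].
- by case=> i [x y].
- by case=> [[i x] y].
Qed.

Lemma fg_copies_bigsum_copies n (I : finType) (k : I -> nat) (G : I -> fgraph) :
  fg_iso (fg_copies n (fg_bigsum (fun i => fg_copies (k i) (G i))))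
         (fg_bigsum (fun i => fg_copies (n * k i) (G i))).
Proof.
apply: fg_iso_trans (fg_copies_bigsum _ _) _.
by apply: fg_iso_bigsum => i; apply: fg_copies_copies.
Qed.

Lemma fg_prod_copies n G H :
  fg_iso (fg_prod (fg_copies n G) H) (fg_copies n (fg_prod G H)).
Proof. exact: fg_prod_bigsum. Qed.

(** * Decomposing a functional graph *)

Section Fibers.
Variables (T I : finType) (f : T -> T) (lab : T -> I).
Hypothesis labf : forall x, lab (f x) = lab x.

Definition fiber_succ i (x : {x | lab x == i}) : {x | lab x == i} :=
  exist _ (f (val x)) (etrans (congr1 (eq_op^~ i) (labf (val x))) (valP x)).

Definition fg_fiber i : fgraph := FGraph (fiber_succ (i:=i)).

Lemma iter_fiber_succ i (x : {x | lab x == i}) m :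
  val (iter m (fiber_succ (i:=i)) x) = iter m f (val x).
Proof. by elim: m => //= m ->. Qed.

Let to_fiber x : {i : I & {x | lab x == i}} :=
  Tagged _ (exist (fun y => lab y == lab x) x (eqxx _)).

Let to_fiber_eq i x (lx : lab x == i) :
  to_fiber x = Tagged (fun j => {x | lab x == j}) (exist _ x lx).
Proof.
by have Ex := eqP lx; subst i; rewrite /to_fiber (bool_irrelevance lx (eqxx _)).
Qed.

Lemma fgraph_of_fibers : fg_iso (fgraph_of f) (fg_bigsum fg_fiber).
Proof.
apply: (@fg_iso_can (fgraph_of f) (fg_bigsum fg_fiber) to_fiber (fun v => val (tagged v))).
- by [].
- by case=> i [x lx]; apply: to_fiber_eq.
- by move=> x; apply: to_fiber_eq.
Qed.

End Fibers.

Arguments fiber_succ {T I f lab} labf i x.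

Definition fg_cycle L : fgraph := FGraph (@ordS L).

Lemma order_iter_min (T : finType) (f : T -> T) x L : injective f -> 0 < L ->
  iter L f x = x -> (forall m, 0 < m < L -> iter m f x != x) -> order f x = L.
Proof.
move=> f_inj L_gt0 fLx fmx; apply/eqP; rewrite eqn_leq; apply/andP; split.
  rewrite leqNgt; apply/negP => /findex_iter; rewrite fLx findex0 => L0.
  by rewrite -L0 in L_gt0.
rewrite leqNgt; apply/negP => ltoL.
by move: (fmx (order f x)); rewrite order_gt0 ltoL (iter_order f_inj) eqxx; move/(_ isT).
Qed.

Section PermutationUniformOrder.
Variables (T : finType) (f : T -> T) (L : nat).
Hypotheses (f_inj : injective f) (order_f : forall x, order f x = L).

Let f_sym : connect_sym (frel f) := fconnect_sym f_inj.

Let froot_conn x : fconnect f (froot f x) x.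
Proof. by rewrite f_sym connect_root. Qed.

Let findex_froot_lt x : findex f (froot f x) x < L.
Proof. by rewrite -(order_f (froot f x)) findex_max ?froot_conn. Qed.

Let froot_iter (y : {x | froots f x}) m : froot f (iter m f (val y)) = val y.
Proof.
rewrite -{2}(eqP (valP y)); apply/esym/(fingraph.rootP f_sym).
exact: fconnect_iter.
Qed.

Lemma fgraph_of_uniform_perm :
  fg_iso (fgraph_of f) (fg_bigsum (fun _ : {x | froots f x} => fg_cycle L)).
Proof.
apply: (@fg_iso_can (fgraph_of f) (fg_bigsum (fun _ : {x | froots f x} => fg_cycle L))
  (fun x => existT _ (exist _ (froot f x) (roots_root f_sym x))
                     (Ordinal (findex_froot_lt x)))
  (fun v => iter (tagged v) f (val (tag v)))).
- by move=> x /=; rewrite iter_findex ?froot_conn.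
- case=> y k /=; congr existT; first exact/val_inj/froot_iter.
  by apply: val_inj; rewrite /= froot_iter findex_iter ?order_f.
move=> x /=.
have froot_f : froot f (f x) = froot f x.
  by apply/esym/(fingraph.rootP f_sym)/connect1; rewrite /= eqxx.
congr existT; first exact/val_inj.
apply: val_inj; rewrite /= froot_f.
have fx : f x = iter (findex f (froot f x) x).+1 f (froot f x).
  by rewrite iterS iter_findex ?froot_conn.
rewrite fx; have := findex_froot_lt x; rewrite leq_eqVlt => /orP [/eqP ordx | lt].
  by rewrite ordx -{1}(order_f (froot f x)) (iter_order f_inj) findex0 modnn.
by rewrite findex_iter ?order_f // modn_small.
Qed.

Lemma fgraph_of_uniform_perm_copies :
  fg_iso (fgraph_of f) (fg_copies (#|T| %/ L) (fg_cycle L)).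
Proof.
apply: fg_iso_trans fgraph_of_uniform_perm (fg_bigsum_const _ _).
have := fg_iso_card fgraph_of_uniform_perm.
rewrite /= card_tagged sumnE big_map big_enum /= sum_nat_const card_ord => ->.
have [L0|L_gt0] := posnP L; last by rewrite mulnK.
rewrite L0 muln0 div0n; apply: eq_card0 => y.
by have := order_gt0 f (val y); rewrite order_f L0.
Qed.
End PermutationUniformOrder.

Lemma fg_const_Zstar (G : fgraph) (z : fg_V G) n : 0 < n -> #|fg_V G| = n ->
  (forall x, fg_succ x = z) -> fg_iso G (Zstar n).
Proof.
move=> n_gt0 cardG succ_z.
have cardGZ : #|fg_V G| = #|{: option 'I_n.-1}| by rewrite card_option card_ord prednK.
pose b x : option 'I_n.-1 := enum_val (cast_ord cardGZ (enum_rank x)).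
pose b' y : fg_V G := enum_val (cast_ord (esym cardGZ) (enum_rank y)).
have bK : cancel b b' by move=> x; rewrite /b /b' enum_valK cast_ordK enum_rankK.
have b'K : cancel b' b by move=> y; rewrite /b /b' enum_valK cast_ordKV enum_rankK.
pose t := tperm (b z) None.
apply: (@fg_iso_can G (Zstar n) (t \o b) (b' \o t)).
- by move=> x /=; rewrite tpermK bK.
- by move=> y /=; rewrite b'K tpermK.
- by move=> x /=; rewrite succ_z tpermL.
Qed.

(** * Trees and doubling maps *)

Definition fg_tree s : fgraph := FGraph (@tree_parent s).

Lemma cyc_tree_prod L s : fg_iso (fg_prod (fg_cycle L) (fg_tree s)) (cyc_tree L s).
Proof.
(* [up_log 2 v.+1] is the level of [v] in T(s): it drops by one along every
   non-root edge, so shifting the cycle coordinate by it lets the cycle advance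
   only at the root. *)
pose lvl (v : 'I_(2 ^ s)) := up_log 2 v.+1.
apply: (@fg_iso_can (fg_prod (fg_cycle L) (fg_tree s)) (cyc_tree L s)
  (fun p => (iter (lvl p.2) (@ordS L) p.1, p.2))
  (fun p => (iter (lvl p.2) (@ord_pred L) p.1, p.2))).
- case=> i v /=; congr pair.
  by elim: (lvl v) i => // n IH i; rewrite iterSr iterS ordSK IH.
- case=> i v /=; congr pair.
  by elim: (lvl v) i => // n IH i; rewrite iterSr iterS ord_predK IH.
case=> i v /=; have [v0|v_gt0] := posnP v.
  have root_v : tree_parent v = v by apply: val_inj; rewrite /= v0.
  by rewrite root_v -iterSr iterS.
by rewrite /lvl (up_log2S v_gt0) iterSr.
Qed.

Definition dbl_ord N (e : 'I_N) : 'I_N :=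
  Ordinal (ltn_pmod (2 * e) (leq_ltn_trans (leq0n e) (ltn_ord e))).

Definition fg_dbl N : fgraph := FGraph (@dbl_ord N).

Lemma iter_dbl_ord N (e : 'I_N) m : iter m (@dbl_ord N) e = 2 ^ m * e %% N :> nat.
Proof.
elim: m => [|m IH] /=; first by rewrite mul1n modn_small.
by rewrite IH modnMmr expnS mulnA.
Qed.

Fixpoint bits s e : seq bool := if s is s'.+1 then odd e :: bits s' e./2 else [::].

Fixpoint of_bits (l : seq bool) : nat := if l is b :: l' then b + (of_bits l').*2 else 0.

Definition bit_rev s e := of_bits (rev (bits s e)).

Lemma size_bits s e : size (bits s e) = s.
Proof. by elim: s e => //= s IH e; rewrite IH. Qed.

Lemma of_bits_lt l : of_bits l < 2 ^ size l.
Proof. by elim: l => //= b l IH; rewrite expnS; case: b => /=; rewrite -muln2; lia. Qed.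

Lemma of_bitsK l : bits (size l) (of_bits l) = l.
Proof.
elim: l => //= b l IH.
by rewrite oddD odd_double addbF half_bit_double IH; case: b.
Qed.

Lemma modn_double_half e m : 0 < m -> e %% (2 * m) = odd e + (e./2 %% m).*2.
Proof.
move=> m_gt0; rewrite -[in LHS](odd_double_half e) {1}(divn_eq e./2 m).
have -> : odd e + (e./2 %/ m * m + e./2 %% m).*2
          = e./2 %/ m * (2 * m) + (odd e + (e./2 %% m).*2) by rewrite -!muln2; lia.
rewrite modnMDl modn_small //.
by have := ltn_pmod e./2 m_gt0; case: (odd e) => /=; lia.
Qed.

Lemma bitsK s e : of_bits (bits s e) = e %% 2 ^ s.
Proof.
elim: s e => [|s IH] e /=; first by rewrite modn1.
by rewrite IH expnS modn_double_half ?expn_gt0.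
Qed.

Lemma bits_mod s e : bits s (e %% 2 ^ s) = bits s e.
Proof. by rewrite -bitsK -{1}(size_bits s e) of_bitsK. Qed.

Lemma bits_take s e : bits s e = take s (bits s.+1 e).
Proof. by elim: s e => //= s IH e; rewrite -IH. Qed.

Lemma of_bits_rcons0 l : of_bits (rcons l false) = of_bits l.
Proof. by elim: l => //= b l ->. Qed.

Lemma bit_rev_lt s e : bit_rev s e < 2 ^ s.
Proof. by have := of_bits_lt (rev (bits s e)); rewrite size_rev size_bits. Qed.

Lemma bit_revK s e : e < 2 ^ s -> bit_rev s (bit_rev s e) = e.
Proof.
move=> e_lt; rewrite /bit_rev.
have := of_bitsK (rev (bits s e)); rewrite size_rev size_bits => ->.
by rewrite revK bitsK modn_small.
Qed.

Lemma bit_rev_double s e : bit_rev s (2 * e %% 2 ^ s) = (bit_rev s e)./2.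
Proof.
rewrite /bit_rev bits_mod bits_take /= mul2n odd_double doubleK.
have := size_bits s e; case/lastP: (bits s e) => [<- //|l b].
rewrite size_rcons => <- /=; rewrite -cats1 take_size_cat // rev_cons of_bits_rcons0.
by rewrite rev_cat /= half_bit_double.
Qed.

Lemma fg_dbl_pow2 s : fg_iso (fg_dbl (2 ^ s)) (fg_tree s).
Proof.
pose rev_ord (e : 'I_(2 ^ s)) := Ordinal (bit_rev_lt s e).
have rev_ordK : involutive rev_ord by move=> e; apply: val_inj; rewrite /= bit_revK.
apply: (@fg_iso_can (fg_dbl (2 ^ s)) (fg_tree s) _ _ rev_ordK rev_ordK) => e.
by apply: val_inj; rewrite /= bit_rev_double.
Qed.

Lemma eqn_modMl_coprime k m a b :
  coprime k m -> (k * a == k * b %[mod m]) = (a == b %[mod m]).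
Proof.
move=> co_km; wlog le_ba : a b / b <= a.
  by move=> W; case/orP: (leq_total b a) => /W //; rewrite eq_sym [RHS]eq_sym.
rewrite !eqn_mod_dvd ?leq_mul2l ?le_ba ?orbT // -mulnBr Gauss_dvdr //.
by rewrite coprime_sym.
Qed.

Lemma fg_dbl_crt m n :
  coprime m n -> fg_iso (fg_prod (fg_dbl m) (fg_dbl n)) (fg_dbl (m * n)).
Proof.
move=> co_mn.
have crt_lt (ab : 'I_m * 'I_n) : (n * ab.1 + m * ab.2) %% (m * n) < m * n.
  rewrite ltn_pmod // muln_gt0.
  by rewrite (leq_ltn_trans _ (ltn_ord ab.1)) ?(leq_ltn_trans _ (ltn_ord ab.2)).
have mod_l x y : n * x + m * y = n * x %[mod m] by rewrite addnC mulnC modnMDl.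
have mod_r x y : n * x + m * y = m * y %[mod n] by rewrite mulnC modnMDl.
exists (fun ab => Ordinal (crt_lt ab)); split.
  apply: inj_card_bij; last by rewrite card_prod !card_ord.
  case=> [a b] [a' b'] /(congr1 val) /= /eqP; rewrite chinese_remainder //.
  rewrite mod_l mod_r (mod_l a') (mod_r a').
  rewrite !eqn_modMl_coprime ?modn_small // 1?coprime_sym //.
  by case/andP => /eqP/val_inj-> /eqP/val_inj->.
case=> a b; apply: val_inj => /=.
rewrite [n * _]muln_modr [m * (_ %% n)]muln_modr [n * m]mulnC modnDm modnMmr.
congr (_ %% _); ring.
Qed.

(** * Multiplicative orders *)

Lemma leq_totient n : totient n <= n.
Proof.
rewrite totient_count_coprime big_mkord.
apply: (@leq_trans (\sum_(i < n) 1)); first by apply: leq_sum => i _; apply: leq_b1.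
by rewrite sum1_card card_ord.
Qed.

Section MultOrder.
Variables m a : nat.

Let unit_exp k := a ^ k.+1 == 1 %[mod m].

Lemma mult_order_min k : 0 < k < mult_order m a -> a ^ k != 1 %[mod m].
Proof.
case: k => // k /andP [_]; rewrite ltnS => lt_k; have := before_find 0 lt_k.
have lt_km : k < m by rewrite -[m](size_iota 0); apply: leq_trans lt_k (find_size _ _).
by rewrite nth_iota // add0n => ->.
Qed.

Lemma expn_mult_order : coprime a m -> 0 < m -> a ^ mult_order m a = 1 %[mod m].
Proof.
move=> co_am m_gt0.
have has_unit_exp : has unit_exp (iota 0 m).
  apply/hasP; exists (totient m).-1.
    by rewrite mem_iota /= add0n prednK ?totient_gt0 ?leq_totient.
  by rewrite /unit_exp prednK ?totient_gt0 //; apply/eqP/Euler_exp_totient.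
have := nth_find 0 has_unit_exp; rewrite has_find size_iota in has_unit_exp.
by rewrite nth_iota // add0n => /eqP.
Qed.

Lemma dvdn_mult_order k : coprime a m -> 0 < m ->
  (mult_order m a %| k) = (a ^ k == 1 %[mod m]).
Proof.
move=> co_am m_gt0; set o := mult_order m a.
have -> : a ^ k = (a ^ o) ^ (k %/ o) * a ^ (k %% o) by rewrite -expnM -expnD mulnC -divn_eq.
rewrite -modnMml -modnXm expn_mult_order // modnXm exp1n modnMml mul1n.
have [rem0|rem_gt0] := posnP (k %% o).
  by rewrite /dvdn rem0 expn0 !eqxx.
by rewrite /dvdn eqn0Ngt rem_gt0 (negbTE (mult_order_min _)) // rem_gt0 ltn_pmod.
Qed.

End MultOrder.

Lemma mult_order_dvd_totient m a :
  coprime a m -> 0 < m -> mult_order m a %| totient m.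
Proof. by move=> co_am m_gt0; rewrite dvdn_mult_order // Euler_exp_totient. Qed.

(** * Doubling modulo an odd number *)

Lemma coprime_divn_gcd m n :
  0 < gcdn m n -> coprime (m %/ gcdn m n) (n %/ gcdn m n).
Proof.
move=> g_gt0; rewrite /coprime -(eqn_pmul2l g_gt0) muln_gcdr muln1.
by rewrite ![gcdn m n * _]mulnC !divnK ?dvdn_gcdl ?dvdn_gcdr.
Qed.

Lemma dvdn_mul_gcd r e k : 0 < r -> (r %| k * e) = (r %/ gcdn e r %| k).
Proof.
move=> r_gt0; have g_gt0 : 0 < gcdn e r by rewrite gcdn_gt0 r_gt0 orbT.
rewrite -{1}(divnK (dvdn_gcdl e r)) -{1}(divnK (dvdn_gcdr e r)).
rewrite mulnA dvdn_pmul2r // Gauss_dvdl // coprime_sym.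
exact: coprime_divn_gcd.
Qed.

Lemma card_coprime_ord d : #|[pred k : 'I_d | coprime k d]| = totient d.
Proof.
rewrite totient_count_coprime big_mkord -sum1_card big_mkcond /=.
by apply: eq_bigr => k _; rewrite inE coprime_sym; case: coprime.
Qed.

Lemma card_ord_gcd_div r d : 0 < r -> d %| r ->
  #|[pred e : 'I_r | r %/ gcdn e r == d]| = totient d.
Proof.
move=> r_gt0 d_r; have d_gt0 : 0 < d := dvdn_gt0 r_gt0 d_r.
set g := r %/ d; have Dr : r = g * d by rewrite divnK.
have g_gt0 : 0 < g by rewrite divn_gt0 // dvdn_leq.
have lt_gk (k : 'I_d) : g * k < r by rewrite Dr ltn_pmul2l.
pose h k := Ordinal (lt_gk k).
have h_inj : injective h.
  by move=> k k' /(congr1 val) /eqP; rewrite /= eqn_pmul2l // => /eqP /val_inj.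
rewrite -card_coprime_ord -(card_image h_inj); apply: eq_card => e /=.
apply/idP/imageP => [|[k co_kd ->]]; last first.
  by rewrite inE /= {2}Dr -muln_gcdr (eqP co_kd) muln1 {1}Dr mulKn.
rewrite inE => /eqP re_d.
have gcd_g : gcdn e r = g.
  by apply/eqP; rewrite -(eqn_pmul2r d_gt0) -Dr -re_d mulnC divnK ?dvdn_gcdr.
have De : e = g * (e %/ g) :> nat by rewrite mulnC divnK // -gcd_g dvdn_gcdl.
have lt_ed : e %/ g < d by rewrite -(ltn_pmul2l g_gt0) -De -Dr.
exists (Ordinal lt_ed); last exact: val_inj.
by rewrite inE /= -re_d gcd_g -gcd_g coprime_divn_gcd // gcd_g.
Qed.

Section DoublingOdd.
Variable r : nat.
Hypothesis r_odd : odd r.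

Let r_gt0 : 0 < r := odd_gt0 r_odd.

Definition add_order (e : 'I_r) : divisor_idx r :=
  exist (fun d : 'I_r.+1 => val d %| r)
    (Ordinal (leq_div r (gcdn e r) : r %/ gcdn e r < r.+1)) (dvdn_div (dvdn_gcdr e r)).

Lemma add_orderE e (d : divisor_idx r) :
  (add_order e == d) = (r %/ gcdn e r == val (val d)).
Proof. by rewrite -!val_eqE. Qed.

Lemma add_order_dbl e : add_order (dbl_ord e) = add_order e.
Proof.
do 2 apply: val_inj => /=.
by rewrite gcdn_modl gcdnC Gauss_gcdr ?coprimen2 // gcdnC.
Qed.

Lemma dbl_ord_inj : injective (@dbl_ord r).
Proof.
move=> e e' /(congr1 val) /eqP; rewrite /= eqn_modMl_coprime ?coprime2n //.
by rewrite !modn_small // => /eqP /val_inj.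
Qed.

Section Fiber.
Variable d : divisor_idx r.
Let dd := val (val d).
Let sigma := fiber_succ add_order_dbl d.

Let dd_odd : odd dd := dvdn_odd (valP d) r_odd.

Let dd_gt0 : 0 < dd := odd_gt0 dd_odd.

Lemma iter_dbl_fiber_id x m : (iter m sigma x == x) = (2 ^ m == 1 %[mod dd]).
Proof.
rewrite -val_eqE iter_fiber_succ -val_eqE /= iter_dbl_ord.
rewrite -{2}(modn_small (ltn_ord (val x))) eqn_mod_dvd ?leq_pmull ?expn_gt0 //.
rewrite -{2}(mul1n (val x)) -mulnBl dvdn_mul_gcd // eqn_mod_dvd ?expn_gt0 //.
by have := valP x; rewrite add_orderE => /eqP ->.
Qed.

Lemma order_dbl_fiber x : order sigma x = mult_order dd 2.
Proof.
apply: order_iter_min.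
- by move=> y y' /(congr1 val) /dbl_ord_inj yy'; apply: val_inj.
- by [].
- by apply/eqP; rewrite iter_dbl_fiber_id expn_mult_order ?coprime2n ?dd_gt0.
- by move=> m m_lt; rewrite iter_dbl_fiber_id mult_order_min.
Qed.

Lemma card_dbl_fiber : #|{: {e : 'I_r | add_order e == d}}| = totient dd.
Proof.
rewrite card_sig -(card_ord_gcd_div r_gt0 (valP d)).
by apply: eq_card => e; rewrite !inE add_orderE.
Qed.

End Fiber.

Lemma fg_dbl_odd : fg_iso (fg_dbl r)
  (fg_bigsum (fun d : divisor_idx r => let dd := val (val d) in
     fg_copies (totient dd %/ mult_order dd 2) (fg_cycle (mult_order dd 2)))).
Proof.
apply: fg_iso_trans (fgraph_of_fibers add_order_dbl) _; apply: fg_iso_bigsum => d.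
rewrite /= -card_dbl_fiber.
apply: fgraph_of_uniform_perm_copies (order_dbl_fiber (d := d)).
by move=> y y' /(congr1 val) /dbl_ord_inj yy'; apply: val_inj.
Qed.

End DoublingOdd.

Lemma fg_dbl_decomposition s r : odd r ->
  fg_iso (fg_dbl (2 ^ s * r))
    (fg_bigsum (fun d : divisor_idx r => let dd := val (val d) in
       fg_copies (totient dd %/ mult_order dd 2) (cyc_tree (mult_order dd 2) s))).
Proof.
move=> r_odd; have co_r2s : coprime r (2 ^ s) by rewrite coprimeXr ?coprimen2.
rewrite mulnC; apply: fg_iso_trans (fg_iso_sym (fg_dbl_crt co_r2s)) _.
apply: fg_iso_trans (fg_iso_prod (fg_dbl_odd r_odd) (fg_dbl_pow2 s)) _.
apply: fg_iso_trans (fg_prod_bigsum _ _) _; apply: fg_iso_bigsum => d.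
apply: fg_iso_trans (fg_prod_copies _ _ _) _.
by apply: fg_iso_bigsum => _; apply: cyc_tree_prod.
Qed.

(** * The relative trace of a quadratic extension *)

Local Open Scope ring_scope.

Lemma card_lt_size_roots (R : finIdomainType) (P : {poly R}) (A : {pred R}) :
  P != 0 -> {in A, forall x, root P x} -> (#|A| < size P)%N.
Proof.
move=> P0 PA; rewrite cardE; apply: max_poly_roots => //; last exact: enum_uniq.
by apply/allP => x; rewrite mem_enum; apply: PA.
Qed.

Lemma card_le_image_kernel (U V : finZmodType) (f : U -> V) :
  {morph f : x y / x - y} -> (#|U| <= #|f @: setT| * #|[set x | f x == 0%R]|)%N.
Proof.
move=> fB; pose pre y := odflt 0 [pick x | f x == y].
have preK x : f (pre (f x)) = f x.
  by rewrite /pre; case: pickP => [z /eqP //| /(_ x)]; rewrite eqxx.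
pose split_f x := (f x, x - pre (f x)).
have split_inj : injective split_f.
  by move=> x y [fxy]; rewrite fxy => /addIr.
rewrite -cardsX -cardsT -(card_imset _ split_inj); apply: subset_leq_card.
apply/subsetP => _ /imsetP [x _ ->]; rewrite in_setX imset_f ?inE //=.
by rewrite fB preK subrr.
Qed.

Section RelativeTrace.
Variables (F : finFieldType) (q : nat).
Hypotheses (q_gt1 : (1 < q)%N) (q_pchar : [pchar F].-nat q) (cardF : #|F| = (q ^ 2)%N).

Let q_gt0 : (0 < q)%N := ltnW q_gt1.
Let q1_gt0 : (0 < q.-1)%N. Proof. by rewrite -ltnS prednK. Qed.

Definition trace (x : F) := x ^+ q + x.

Lemma frobeniusK (x : F) : (x ^+ q) ^+ q = x.
Proof. by rewrite -exprM mulnn -cardF expf_card. Qed.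

Lemma traceD x y : trace (x + y) = trace x + trace y.
Proof. by rewrite /trace exprDn_pchar // addrACA. Qed.

Lemma traceB x y : trace (x - y) = trace x - trace y.
Proof. by rewrite /trace exprDn_pchar // exprNn_pchar // opprD addrACA. Qed.

Lemma trace_fixed x : trace x ^+ q = trace x.
Proof. by rewrite /trace exprDn_pchar // frobeniusK addrC. Qed.

Lemma traceZ a x : a ^+ q = a -> trace (a * x) = a * trace x.
Proof. by move=> aq; rewrite /trace exprMn aq mulrDr. Qed.

Lemma trace0 : trace 0 = 0.
Proof. by rewrite /trace expr0n eqn0Ngt q_gt0 addr0. Qed.

Let size_Xq_addX (b : F) : size ('X^q + b *: 'X : {poly F}) = q.+1.
Proof.
rewrite size_polyDl size_polyXn // (leq_ltn_trans (size_scale_leq _ _)) //.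
by rewrite size_polyX ltnS.
Qed.

Let card_root_Xq_addX (b : F) (A : {pred F}) :
  {in A, forall x, x ^+ q + b * x = 0} -> (#|A| <= q)%N.
Proof.
move=> Ax; rewrite -ltnS -(size_Xq_addX b) card_lt_size_roots //.
  by rewrite -size_poly_eq0 size_Xq_addX.
by move=> x /Ax x_root; apply/rootP; rewrite hornerD hornerZ hornerXn hornerX.
Qed.

Let card_fixed_le : (#|[set x : F | x ^+ q == x]| <= q)%N.
Proof.
by apply: (@card_root_Xq_addX (-1)) => x; rewrite inE => /eqP ->; rewrite mulN1r subrr.
Qed.

Let card_trace_kernel_le : (#|[set x | trace x == 0%R]| <= q)%N.
Proof. by apply: (@card_root_Xq_addX 1) => x; rewrite inE mul1r => /eqP. Qed.

Lemma trace_kernel_image :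
  [/\ #|[set x | trace x == 0]| = q, #|[set x : F | x ^+ q == x]| = q
     & trace @: setT = [set x : F | x ^+ q == x]].
Proof.
have im_fixed : trace @: setT \subset [set x : F | x ^+ q == x].
  by apply/subsetP => _ /imsetP [x _ ->]; rewrite inE trace_fixed.
have sq_le := card_le_image_kernel traceB; rewrite cardF in sq_le.
have im_le := leq_trans (subset_leq_card im_fixed) card_fixed_le.
have ker_le := card_trace_kernel_le.
move: sq_le im_le ker_le; set a := #|trace @: _|; set b := #|[set x | _]|.
move=> sq_le im_le ker_le; have [im_q ker_q] : a = q /\ b = q by nia.
have fixed_q : #|[set x : F | x ^+ q == x]| = q.
  by apply/eqP; rewrite eqn_leq card_fixed_le -{1}im_q subset_leq_card.
by split=> //; apply/eqP; rewrite eqEcard im_fixed fixed_q -{1}im_q /= leqnn.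
Qed.

Lemma card_trace_eq1 : #|[set y | trace y == 1]| = q.
Proof.
have [ker_q _ im_trace] := trace_kernel_image.
have /imsetP [y1 _ trace_y1] : (1 : F) \in trace @: setT by rewrite im_trace inE expr1n.
rewrite -ker_q -[RHS](card_imset _ (addIr y1)); apply: eq_card => y; rewrite inE.
apply/eqP/imsetP => [trace_y | [x]]; last first.
  by rewrite inE => /eqP ker_x ->; rewrite traceD ker_x add0r trace_y1.
exists (y - y1); last by rewrite subrK.
by rewrite inE traceB trace_y -trace_y1 subrr.
Qed.

Definition fixed_unit : pred F := fun u => (u ^+ q == u) && (u != 0).

Lemma card_fixed_unit : #|fixed_unit| = q.-1.
Proof.
have [_ + _] := trace_kernel_image; rewrite (cardsD1 0) inE expr0n eqn0Ngt q_gt0 eqxx.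
by rewrite add1n => <-; apply: eq_card => u; rewrite !inE andbC.
Qed.

Lemma fixed_unit_sqr u : fixed_unit u -> fixed_unit (u ^+ 2).
Proof. by case/andP => /eqP uq u0; rewrite /fixed_unit exprAC uq eqxx expf_neq0. Qed.

Definition sqr_fixed_unit (u : {u | fixed_unit u}) : {u | fixed_unit u} :=
  exist _ (val u ^+ 2) (fixed_unit_sqr (valP u)).

Definition fg_sqr : fgraph := FGraph sqr_fixed_unit.

Lemma exists_prim_root_fixed : exists w : F, q.-1.-primitive_root w.
Proof.
have unity_fixed : all q.-1.-unity_root (enum fixed_unit).
  apply/allP => u; rewrite mem_enum => /andP [/eqP uq u0]; rewrite unity_rootE.
  by apply/eqP/(mulIf u0); rewrite mul1r -exprSr prednK.
have /hasP [w _ w_prim] := has_prim_root q1_gt0 unity_fixed (enum_uniq _)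
  (eq_leq (esym (etrans (esym (cardE _)) card_fixed_unit))).
by exists w.
Qed.

Lemma fg_dbl_sqr : fg_iso (fg_dbl q.-1) fg_sqr.
Proof.
have [w w_prim] := exists_prim_root_fixed; have w_q1 := prim_expr_order w_prim.
have w0 : w != 0.
  by apply/eqP => w0; move/eqP: w_q1; rewrite w0 expr0n eqn0Ngt q1_gt0 eq_sym oner_eq0.
have w_q : w ^+ q = w by rewrite -(prednK q_gt0) exprS w_q1 mulr1.
have w_fixed i : fixed_unit (w ^+ i) by rewrite /fixed_unit exprAC w_q eqxx expf_neq0.
exists (fun i : 'I_q.-1 => exist _ (w ^+ i) (w_fixed i)); split.
  apply: inj_card_bij; last by rewrite card_sig card_fixed_unit card_ord.
  move=> i j /(congr1 val) /= /eqP; rewrite (eq_prim_root_expr w_prim) !modn_small //.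
  by move/eqP/val_inj.
by move=> i; apply: val_inj; rewrite /= prim_expr_mod // -exprM mulnC.
Qed.

Section TraceMap.
Variable c : F.
Hypotheses (c0 : c != 0) (cq : c ^+ q = c).

Let fc (x : F) := c * (x ^+ q.+1 + x ^+ 2).

Lemma fcE x : fc x = c * trace x * x.
Proof. by rewrite /fc /trace exprS expr2; ring. Qed.

Lemma c_trace_fixed x : (c * trace x) ^+ q = c * trace x.
Proof. by rewrite exprMn cq trace_fixed. Qed.

Lemma trace_fc x : trace (fc x) = c * trace x ^+ 2.
Proof. by rewrite fcE traceZ ?c_trace_fixed // -mulrA -expr2. Qed.

Lemma trace_fc_eq0 x : (trace (fc x) == 0) = (trace x == 0).
Proof. by rewrite trace_fc mulf_eq0 (negbTE c0) expf_eq0. Qed.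

Lemma fg_fiber_trace_kernel : fg_iso (fg_fiber trace_fc_eq0 true) (Zstar q).
Proof.
have ker0 : (trace 0 == 0) == true by rewrite trace0 eqxx.
apply: (@fg_const_Zstar (fg_fiber trace_fc_eq0 true) (exist _ 0 ker0)) => //.
  have [ker_q _ _] := trace_kernel_image; rewrite /= card_sig -ker_q.
  by apply: eq_card => x; rewrite !inE eqb_id.
case=> x ker_x; apply: val_inj; move: ker_x; rewrite /= eqb_id fcE => /eqP ->.
by rewrite mulr0 mul0r.
Qed.

Let normalize_trace1 x : (trace x == 0) == false -> trace (x / trace x) == 1.
Proof.
rewrite eqbF_neg => tr_x; rewrite mulrC traceZ ?mulVf //.
by rewrite exprVn trace_fixed.
Qed.

Let c_trace_fixed_unit x : (trace x == 0) == false -> fixed_unit (c * trace x).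
Proof. by rewrite eqbF_neg => tr_x; rewrite /fixed_unit c_trace_fixed eqxx mulf_neq0. Qed.

Let trace_scale y u : fixed_unit u -> trace y = 1 -> trace (u / c * y) = u / c.
Proof.
case/andP => /eqP uq _ tr_y.
by rewrite traceZ ?tr_y ?mulr1 // exprMn exprVn uq cq.
Qed.

Let scale_nonkernel (y : {y | trace y == 1}) (u : {u | fixed_unit u}) :
  (trace (val u / c * val y) == 0) == false.
Proof.
rewrite eqbF_neg (trace_scale (valP u) (eqP (valP y))) mulf_neq0 ?invr_eq0 //.
by case/andP: (valP u).
Qed.

Lemma fg_fiber_trace_nonkernel :
  fg_iso (fg_fiber trace_fc_eq0 false) (fg_bigsum (fun _ : {y | trace y == 1} => fg_sqr)).
Proof.
apply: (@fg_iso_can (fg_fiber trace_fc_eq0 false)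
    (fg_bigsum (fun _ : {y | trace y == 1} => fg_sqr))
  (fun x => existT (fun _ => {u | fixed_unit u})
     (exist _ (val x / trace (val x)) (normalize_trace1 (valP x)))
     (exist _ (c * trace (val x)) (c_trace_fixed_unit (valP x))))
  (fun v => exist _ (val (tagged v) / c * val (tag v))
     (scale_nonkernel (tag v) (tagged v)))).
- case=> x tr_x; apply: val_inj => /=; have tr_x0 : trace x != 0 by rewrite -eqbF_neg.
  by field; apply/andP.
- case=> [[y tr_y] [u fixed_u]] /=.
  have u0 : u != 0 by case/andP: fixed_u.
  by congr existT; apply: val_inj; rewrite /= (trace_scale fixed_u (eqP tr_y));
    field; rewrite ?c0 ?u0.
- case=> x tr_x /=; have tr_x0 : trace x != 0 by rewrite -eqbF_neg.
  congr existT; apply: val_inj; rewrite /= trace_fc ?fcE; last by rewrite expr2; ring.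
  by field; apply/andP.
Qed.

Lemma fgraph_of_trace_map : fg_iso (fgraph_of fc) (fg_sum (Zstar q) (fg_copies q fg_sqr)).
Proof.
apply: fg_iso_trans (fgraph_of_fibers trace_fc_eq0) _.
apply: fg_iso_trans (fg_bigsum_bool _) (fg_iso_sum fg_fiber_trace_kernel _).
apply: fg_iso_trans fg_fiber_trace_nonkernel (fg_bigsum_const _ _).
by rewrite card_sig -card_trace_eq1; apply: eq_card => y; rewrite inE.
Qed.

End TraceMap.

End RelativeTrace.

Theorem theorem19 (p k : nat) (F : finFieldType) (q s r : nat) (c : F) :
  prime p -> odd p -> (0 < k)%N -> q = (p ^ k)%N ->
  #|F| = (q ^ 2)%N ->
  odd r -> q.-1 = (2 ^ s * r)%N ->
  c != 0 -> c ^+ q = c ->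
  fg_iso (fgraph_of (fun x : F => c * (x ^+ q.+1 + x ^+ 2)))
    (fg_sum (Zstar q)
       (fg_bigsum (fun d : divisor_idx r =>
          let dd := val (val d) in
          fg_copies (q * totient dd %/ mult_order dd 2)%N
            (cyc_tree (mult_order dd 2) s)))).
Proof.
move=> p_prime _ k_gt0 qE cardF r_odd q1E c0 cq.
have q_gt1 : (1 < q)%N by rewrite qE -(expn0 p) ltn_exp2l ?prime_gt1.
have q_pchar : [pchar F].-nat q.
  by rewrite qE pnatX (pnatE _ p_prime) (@card_finPcharP _ _ (k * 2)) // cardF qE expnM.
apply: fg_iso_trans (fgraph_of_trace_map q_gt1 q_pchar cardF c0 cq) _.
apply: fg_iso_sum (fg_iso_refl _) _.
apply: fg_iso_trans (fg_iso_copies _ (fg_iso_sym (fg_dbl_sqr q_gt1 q_pchar cardF))) _.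
rewrite q1E; apply: fg_iso_trans (fg_iso_copies _ (fg_dbl_decomposition s r_odd)) _.
apply: fg_iso_trans (fg_copies_bigsum_copies _ _ _) _; apply: fg_iso_bigsum => d.
have dd_odd := dvdn_odd (valP d) r_odd.
by rewrite /= muln_divA ?mult_order_dvd_totient ?coprime2n ?odd_gt0 //; apply: fg_iso_refl.
Qed.
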